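(* There are exactly $240$ special Sudoku grids over $\mathbb{Z}_5$. Moreover, there is a special Sudoku grid $S_0$ over $\mathbb{Z}_5$ such that every special Sudoku grid over $\mathbb{Z}_5$ is equivalent to $S_0$ up to relabeling and reflection, i.e. it is obtained from $S_0$ or from $s(S_0)$ by a relabeling of symbols.
   Context: Work in $\mathbb{Z}_5^2$ with Lee distance $d_L(\mathbf{u},\mathbf{v})=\sum_i\min\{w_i,5-w_i\}$, $\mathbf{w}=\mathbf{u}-\mathbf{v}$. A $(2,5,3)$ perfect code over $\mathbb{Z}_5$ is a set $\mathcal{C}=\{\mathbf{c}_1,\dots,\mathbf{c}_5\}\subseteq\mathbb{Z}_5^2$ with minimum Lee distance $3$ (so the Lee balls of radius $1$, each of size $5$, around the codewords partition $\mathbb{Z}_5^2$). Its palette grid $\mathcal{I}_\mathcal{C}$ is the $5\times5$ array (rows/columns indexed by $\mathbb{Z}_5$) with entry $i$ at every position in the radius-1 ball around $\mathbf{c}_i$. A perfect Sudoku grid with respect to $\mathcal{C}$ is a Latin square of order $5$ on $\{1,\dots,5\}$ orthogonal to $\mathcal{I}_\mathcal{C}$ (all $25$ ordered pairs of corresponding entries distinct). A special Sudoku grid over $\mathbb{Z}_5$ is a $5\times5$ array that is a perfect Sudoku grid with respect to every $(2,5,3)$ perfect code over $\mathbb{Z}_5$. Relabeling applies a bijection of $\{1,\dots,5\}$ to all entries; the reflection is $(s(A))_{i,j}=A_{i,4-j}$. *)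

From mathcomp Require Import all_boot all_order all_algebra all_fingroup.
Set Implicit Arguments. Unset Strict Implicit. Unset Printing Implicit Defensive.
Import GRing.Theory.

(* Z_5 is modelled as 'I_5 with its canonical ring structure mod 5 (zmodp). *)
Definition Z5 := 'I_5.
Definition point := (Z5 * Z5)%type.

Definition lee_wt (w : Z5) : nat := minn (val w) (5 - val w).

Definition lee_dist (u v : point) : nat :=
  lee_wt (u.1 - v.1)%R + lee_wt (u.2 - v.2)%R.

(* Symbols {1,...,5} are represented by 'I_5 = {0,...,4} (symbol k+1 <-> k). *)
Definition symbol := 'I_5.

(* A 5x5 array: entry at (row i, column j). *)
Definition grid := {ffun point -> symbol}.

(* A (2,5,3) perfect code {c_1,...,c_5}, given as the indexed family
   c : 'I_5 -> Z_5^2 (codeword c_(i+1) = c i), with minimum Lee distance 3. *)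
Definition perfect_code (c : 'I_5 -> point) : bool :=
  [forall i, forall j, (i != j) ==> (3 <= lee_dist (c i) (c j))] &&
  [exists i, exists j, (i != j) && (lee_dist (c i) (c j) == 3)].

Definition palette (c : 'I_5 -> point) : grid :=
  [ffun p => odflt ord0 [pick i | lee_dist p (c i) <= 1]].

Definition latin (A : grid) : bool :=
  [forall i : Z5, injectiveb (fun j : Z5 => A (i, j))] &&
  [forall j : Z5, injectiveb (fun i : Z5 => A (i, j))].

Definition orthogonal (A B : grid) : bool :=
  injectiveb (fun p : point => (A p, B p)).

Definition perfect_sudoku (c : 'I_5 -> point) (A : grid) : bool :=
  latin A && orthogonal A (palette c).

Definition special (A : grid) : bool :=
  [forall c : {ffun 'I_5 -> point}, perfect_code c ==> perfect_sudoku c A].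

Definition relabel (sigma : {perm symbol}) (A : grid) : grid :=
  [ffun p => sigma (A p)].

Definition reflect_grid (A : grid) : grid :=
  [ffun p : point => A (p.1, rev_ord p.2)].

(* A special grid is exactly a Latin square in which any two cells at Lee
   distance at most 2 carry different symbols: the radius-1 balls of a perfect
   code partition the torus, and conversely every point is a codeword of a
   translate of the perfect code {(i, 2i)}, so two cells at distance at most 2
   share a ball of some perfect code.  Hence the five cells of a symbol, one per
   row, are pairwise at distance at least 3.  Adjacent rows force every column
   step to have weight 2, i.e. to be 2 or 3, and rows two apart forbid a step
   followed by its opposite, so each symbol lies on a line of slope 2 or 3.
   Lines of different slopes meet, so all symbols share one slope m and the grid
   is a relabeling of (i, j) |-> j - m i: for m = 2 this is S0, for m = 3 a
   relabeling of its reflection.  The two relabeling orbits are disjoint and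
   have 5! elements each. *)

From Pilot Require Import Defs.
From mathcomp Require Import all_boot all_order all_algebra all_fingroup.
From mathcomp Require Import ring.
Set Implicit Arguments. Unset Strict Implicit. Unset Printing Implicit Defensive.
Import GRing.Theory.
Local Open Scope ring_scope.

Lemma Z5_ind (P : Z5 -> Prop) : P 0 -> P 1 -> P 2 -> P 3 -> P 4 -> forall x, P x.
Proof.
move=> P0 P1 P2 P3 P4 x.
have : x \in [:: 0; 1; 2; 3; 4] by case: x => -[|[|[|[|[|]]]]].
by rewrite !inE => /or4P[| | | /orP[]] /eqP->.
Qed.

Lemma neq_addr (V : zmodType) (x y : V) : y != 0 -> x != x + y.
Proof. by apply: contra => /eqP e; rewrite -(addKr x y) -e addNr. Qed.

Lemma lee_wtN (a : Z5) : lee_wt (- a) = lee_wt a.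
Proof. by elim/Z5_ind: a. Qed.

Lemma lee_wtD (a b : Z5) : (lee_wt (a + b)%R <= lee_wt a + lee_wt b)%N.
Proof. by elim/Z5_ind: a; elim/Z5_ind: b. Qed.

Lemma lee_wt_le2 (a : Z5) : (lee_wt a <= 2)%N.
Proof. by elim/Z5_ind: a. Qed.

Lemma lee_wt_gt0 (a : Z5) : (0 < lee_wt a)%N = (a != 0).
Proof. by elim/Z5_ind: a. Qed.

Lemma lee_wt_ge2 (m : Z5) : (2 <= lee_wt m)%N -> m = 2 \/ m = 3.
Proof. by elim/Z5_ind: m => // _; [left | right]. Qed.

Lemma lee_wt_ge2_eq (a b : Z5) :
  (2 <= lee_wt a)%N -> (2 <= lee_wt b)%N -> a + b != 0 -> a = b.
Proof. by move=> ha hb nz; apply/eqP; move: a b ha hb nz; elim/Z5_ind; elim/Z5_ind. Qed.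

Lemma lee_wt_ge2_line (m a : Z5) :
  (2 <= lee_wt m)%N -> a != 0 -> (3 <= lee_wt a + lee_wt (m * a)%R)%N.
Proof. by move: m a; elim/Z5_ind; elim/Z5_ind. Qed.

Lemma lee_wt_ge2_mulrI (m : Z5) : (2 <= lee_wt m)%N -> injective (GRing.mul m).
Proof.
move=> hm a b /eqP; rewrite -subr_eq0 -mulrBr => /eqP mab.
apply/eqP; rewrite -subr_eq0; apply: contraT => nz.
by have := lee_wt_ge2_line hm nz; rewrite mab addn0 leqNgt ltnS lee_wt_le2.
Qed.

Definition lee_norm (u : point) : nat := lee_wt u.1 + lee_wt u.2.

Lemma lee_distE u v : lee_dist u v = lee_norm (u - v).
Proof. by []. Qed.

Lemma lee_normN u : lee_norm (- u) = lee_norm u.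
Proof. by rewrite /lee_norm /= !lee_wtN. Qed.

Lemma lee_normD u v : (lee_norm (u + v)%R <= lee_norm u + lee_norm v)%N.
Proof. by rewrite /lee_norm addnACA leq_add ?lee_wtD. Qed.

Lemma lee_distC u v : lee_dist u v = lee_dist v u.
Proof. by rewrite !lee_distE -lee_normN opprB. Qed.

Lemma lee_dist_triangle u v w : (lee_dist u w <= lee_dist u v + lee_dist v w)%N.
Proof. by rewrite !lee_distE; have := lee_normD (u - v) (v - w); rewrite addrA subrK. Qed.

Lemma lee_distDl c u v : lee_dist (c + u) (c + v) = lee_dist u v.
Proof. by rewrite !lee_distE opprD addrACA subrr add0r. Qed.

Lemma lee_dist_le2 u v m :
  (lee_dist u m <= 1)%N -> (lee_dist v m <= 1)%N -> (lee_dist u v <= 2)%N.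
Proof.
move=> um vm; apply: leq_trans (lee_dist_triangle u m v) _.
by rewrite (lee_distC m) (leq_add um vm).
Qed.

Lemma lee_dist_rows (i k a b : Z5) :
  lee_dist (i, a) (i + k, b) = (lee_wt k + lee_wt (b - a)%R)%N.
Proof. by rewrite /lee_dist /= opprD addrA subrr add0r lee_wtN -opprB lee_wtN. Qed.

Definition lee_units : seq point := [:: 0; (1, 0); (-1, 0); (0, 1); (0, -1)].

Lemma lee_units_norm : all (fun v => lee_norm v <= 1)%N lee_units.
Proof. by []. Qed.

Definition lee_unit (d : 'I_5) : point := nth 0 lee_units d.

Lemma lee_norm_unit d : (lee_norm (lee_unit d) <= 1)%N.
Proof. exact/(allP lee_units_norm)/mem_nth. Qed.

Lemma lee_unit_inj : injective lee_unit.
Proof. by move=> d e /eqP; rewrite nth_uniq // => /eqP/val_inj. Qed.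

Lemma lee_midpoint p q : (lee_dist p q <= 2)%N ->
  exists m, (lee_dist p m <= 1)%N /\ (lee_dist q m <= 1)%N.
Proof.
have split_le2 u : (lee_norm u <= 2)%N -> has (fun v => lee_norm (u - v)%R <= 1)%N lee_units.
  by case: u => a b; elim/Z5_ind: a; elim/Z5_ind: b.
rewrite lee_distE => /split_le2/hasP [v v_unit pqv].
exists (p - v); split; last by rewrite lee_distC lee_distE addrAC.
by rewrite lee_distE opprB addrC subrK; apply: (allP lee_units_norm).
Qed.

Definition lee_separated (A : grid) : Prop :=
  forall p q, (lee_dist p q <= 2)%N -> A p = A q -> p = q.

Section PerfectCode.

Variable c : 'I_5 -> point.
Hypothesis c_perfect : perfect_code c.

Lemma perfect_code_ball_uniq p i j :
  (lee_dist p (c i) <= 1)%N -> (lee_dist p (c j) <= 1)%N -> i = j.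
Proof.
rewrite !(lee_distC p) => ip jp; apply/eqP; apply: contraT => ij.
case/andP: c_perfect => /forallP/(_ i)/forallP/(_ j)/implyP/(_ ij).
by rewrite leqNgt ltnS (lee_dist_le2 ip jp).
Qed.

(* The 5 x 5 pairs (codeword, unit step) inject into the 25 points. *)
Lemma perfect_code_cover p : exists i, (lee_dist p (c i) <= 1)%N.
Proof.
pose F (x : 'I_5 * 'I_5) : point := lee_unit x.2 + c x.1.
have F_ball x : (lee_dist (F x) (c x.1) <= 1)%N by rewrite lee_distE addrK lee_norm_unit.
have F_inj : injective F.
  move=> [i d] [j e] eqF.
  have ij : i = j by apply: perfect_code_ball_uniq (F_ball (i, d)) _; rewrite eqF F_ball.
  by move: eqF; rewrite /F /= ij => /addIr/lee_unit_inj ->.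
have [g _ gK] := injF_bij F_inj.
by exists (g p).1; rewrite -[p in lee_dist p]gK F_ball.
Qed.

Lemma palette_ball p i : (lee_dist p (c i) <= 1)%N -> palette c p = i.
Proof.
move=> ip; rewrite ffunE; case: pickP => [j jp | /(_ i)] /=.
  exact: perfect_code_ball_uniq jp ip.
by rewrite ip.
Qed.

Lemma orthogonal_palette A : lee_separated A -> Defs.orthogonal A (palette c).
Proof.
move=> A_sep; apply/injectiveP => p q [eqA].
have [i ip] := perfect_code_cover p; have [j jq] := perfect_code_cover q.
rewrite (palette_ball ip) (palette_ball jq) => ij; subst j.
exact: A_sep (lee_dist_le2 ip jq) eqA.
Qed.

End PerfectCode.

Definition diag_code (m : point) : {ffun 'I_5 -> point} := [ffun i => m + (i, 2 * i)].

Lemma diag_code0 m : diag_code m 0 = m.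
Proof. by rewrite ffunE mulr0 addr0. Qed.

Lemma perfect_diag_code m : perfect_code (diag_code m).
Proof.
apply/andP; split; last first.
  by apply/existsP; exists 0; apply/existsP; exists 1; rewrite !ffunE lee_distDl.
apply/forallP => i; apply/forallP => j; apply/implyP => ij.
rewrite !ffunE lee_distDl /lee_dist /= -mulrBr.
by apply: lee_wt_ge2_line; rewrite ?subr_eq0.
Qed.

Lemma specialP A : reflect (latin A /\ lee_separated A) (special A).
Proof.
apply: (iffP forallP) => [A_special | [A_latin A_sep] c].
  have A_sudoku m := implyP (A_special (diag_code m)) (perfect_diag_code m).
  split; first by case/andP: (A_sudoku 0).
  move=> p q /lee_midpoint [m [pm qm]] eqA.
  have /andP [_ /injectiveP orth] := A_sudoku m.
  rewrite -(diag_code0 m) in pm qm.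
  have pal_m := palette_ball (perfect_diag_code m).
  by apply: orth; rewrite /= eqA (pal_m _ _ pm) (pal_m _ _ qm).
apply/implyP => c_perfect; rewrite /perfect_sudoku A_latin.
exact: orthogonal_palette.
Qed.

Lemma latin_row A : latin A -> forall i, injective (fun j => A (i, j)).
Proof. by case/andP => /forallP rows _ i; apply/injectiveP. Qed.

Lemma latin_col A : latin A -> forall j, injective (fun i => A (i, j)).
Proof. by case/andP => _ /forallP cols j; apply/injectiveP. Qed.

Lemma special_relabel s A : special A -> special (relabel s A).
Proof.
case/specialP => A_latin A_sep; apply/specialP; split.
  apply/andP; split; apply/forallP => k; apply/injectiveP => x y; rewrite !ffunE.
    by move/perm_inj/(latin_row A_latin).
  by move/perm_inj/(latin_col A_latin).
by move=> p q pq; rewrite !ffunE => /perm_inj; apply: A_sep.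
Qed.

Lemma relabelM s t A : relabel s (relabel t A) = relabel (t * s)%g A.
Proof. by apply/ffunP => p; rewrite !ffunE permM. Qed.

Lemma relabel_eq_entries s t A B p q :
  relabel s A = relabel t B -> A p = A q -> B p = B q.
Proof.
move=> /ffunP eqAB Apq; apply: (@perm_inj _ t).
by have := eqAB p; have := eqAB q; rewrite !ffunE Apq => <- <-.
Qed.

Definition slope_grid (m : Z5) : grid := [ffun p : point => p.2 - m * p.1].

Lemma special_slope_grid m : (2 <= lee_wt m)%N -> special (slope_grid m).
Proof.
move=> m_ge2; apply/specialP; split.
  apply/andP; split; apply/forallP => k; apply/injectiveP => x y; rewrite !ffunE /=.
    exact: addIr.
  by move=> /addrI/oppr_inj/(lee_wt_ge2_mulrI m_ge2).
move=> p q pq; rewrite !ffunE => eq_pq.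
have eq2 : p.2 - q.2 = m * (p.1 - q.1) by rewrite -[p.2](subrK (m * p.1)) eq_pq; ring.
have [eq1 | nz] := eqVneq (p.1 - q.1) 0.
  move: eq1 eq2 {pq eq_pq}; case: p q => [p1 p2] [q1 q2] /= /subr0_eq ->.
  by rewrite subrr mulr0 => /subr0_eq ->.
by move: (lee_wt_ge2_line m_ge2 nz) pq; rewrite /lee_dist -eq2 leqNgt ltnS => /negbTE ->.
Qed.

Section Transversal.

Variable f : Z5 -> Z5.
Hypothesis f_sep : forall i i', i != i' -> (3 <= lee_dist (i, f i) (i', f i'))%N.

Lemma transversal_step i : (2 <= lee_wt (f (i + 1) - f i)%R)%N.
Proof. by have := f_sep (neq_addr i (oner_neq0 _)); rewrite lee_dist_rows add1n ltnS. Qed.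

Lemma transversal_step_eq i : f (i + 1 + 1) - f (i + 1) = f (i + 1) - f i.
Proof.
apply: lee_wt_ge2_eq (transversal_step _) (transversal_step _) _.
have := f_sep (neq_addr i (isT : (1 + 1 : Z5) != 0)).
by rewrite lee_dist_rows addrA addrA subrK -lee_wt_gt0 addnC; case: (lee_wt _).
Qed.

Lemma transversal_slope : (2 <= lee_wt (f 1 - f 0)%R)%N.
Proof. by have := transversal_step 0; rewrite add0r. Qed.

Lemma transversal_affine i : f i = f 0 + (f 1 - f 0) * i.
Proof.
have step_const k : f k.+1%:R - f k%:R = f 1 - f 0.
  by elim: k => [|k IHk] //; rewrite -!natr1 transversal_step_eq natr1.
have affine k : f k%:R = f 0 + (f 1 - f 0) * k%:R.
  elim: k => [|k IHk]; first by rewrite mulr0 addr0.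
  by rewrite -(subrK (f k%:R) (f k.+1%:R)) step_const IHk; ring.
by rewrite -[i]natr_Zp affine.
Qed.

End Transversal.

Lemma lines_meet (b b' : Z5) : b + 2 * (b - b') = b' + 3 * (b - b').
Proof. ring. Qed.

Section Classification.

Variable A : grid.
Hypotheses (A_latin : latin A) (A_sep : lee_separated A).

Definition symbol_col (s : symbol) (i : Z5) : Z5 := invF (latin_row A_latin (i := i)) s.

Lemma symbol_colK s i : A (i, symbol_col s i) = s.
Proof. exact: (f_invF (latin_row A_latin (i := i))). Qed.

Lemma symbol_col_eq s i j : A (i, j) = s -> symbol_col s i = j.
Proof. by move=> <-; apply: (invF_f (latin_row A_latin (i := i))). Qed.

Lemma symbol_col_sep s i i' :
  i != i' -> (3 <= lee_dist (i, symbol_col s i) (i', symbol_col s i'))%N.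
Proof.
move=> ii'; rewrite leqNgt ltnS; apply: contra ii' => near.
by have [] := A_sep near (etrans (symbol_colK s i) (esym (symbol_colK s i'))) => ->.
Qed.

Definition symbol_slope (s : symbol) : Z5 := symbol_col s 1 - symbol_col s 0.

Lemma symbol_slope_ge2 s : (2 <= lee_wt (symbol_slope s))%N.
Proof. exact: transversal_slope (@symbol_col_sep s). Qed.

Lemma symbol_col_affine s i : symbol_col s i = symbol_col s 0 + symbol_slope s * i.
Proof. exact: (transversal_affine (@symbol_col_sep s) i). Qed.

Lemma symbol_slope_eq s t : symbol_slope s = symbol_slope t.
Proof.
have meet u v : symbol_slope u = 2 -> symbol_slope v = 3 -> u = v.
  move=> slope_u slope_v; pose i := symbol_col u 0 - symbol_col v 0.
  rewrite -(symbol_colK u i) -(symbol_colK v i).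
  by rewrite (symbol_col_affine u i) (symbol_col_affine v i) slope_u slope_v /i lines_meet.
have [slope_s|slope_s] := lee_wt_ge2 (symbol_slope_ge2 s);
have [slope_t|slope_t] := lee_wt_ge2 (symbol_slope_ge2 t).
- by rewrite slope_s slope_t.
- by rewrite (meet s t slope_s slope_t).
- by rewrite (meet t s slope_t slope_s).
- by rewrite slope_s slope_t.
Qed.

Lemma latin_separated_slope_grid :
  exists2 m, (2 <= lee_wt m)%N & exists s, A = relabel s (slope_grid m).
Proof.
exists (symbol_slope (A (0, 0))); first exact: symbol_slope_ge2.
exists (perm (latin_row A_latin (i := 0))); apply/ffunP => -[i j]; rewrite !ffunE permE /=.
set s := A (i, j); have col_ij : symbol_col s i = j := symbol_col_eq (erefl s).
by rewrite -(symbol_slope_eq s) -col_ij (symbol_col_affine s i) addrK symbol_colK.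
Qed.

End Classification.

Definition slope_orbit (m : Z5) : {set grid} :=
  [set relabel s (slope_grid m) | s : {perm symbol}].

Lemma card_slope_orbit m : #|slope_orbit m| = 120%N.
Proof.
rewrite card_imset ?card_Sn // => s t /ffunP eq_st; apply/permP => x.
by have := eq_st (0, x); rewrite !ffunE /= mulr0 subr0.
Qed.

Lemma slope_orbits_disjoint : slope_orbit 2 :&: slope_orbit 3 = set0.
Proof.
apply/setP => A; rewrite !inE; apply/negP => /andP [/imsetP [s _ ->] /imsetP [t _ eq_st]].
have same2 : slope_grid 2 (0, 0) = slope_grid 2 (1, 2) by apply/eqP; rewrite !ffunE.
by have /eqP := relabel_eq_entries eq_st same2; rewrite !ffunE.
Qed.

Lemma special_setE : [set A | special A] = slope_orbit 2 :|: slope_orbit 3.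
Proof.
apply/setP => A; rewrite !inE; apply/idP/orP => [/specialP [A_latin A_sep] | ].
  have [m /lee_wt_ge2 [] -> [s ->]] := latin_separated_slope_grid A_latin A_sep.
    by left; apply/imsetP; exists s.
  by right; apply/imsetP; exists s.
by case=> /imsetP [s _ ->]; apply/special_relabel/special_slope_grid.
Qed.

Lemma slope_grid3_reflect :
  slope_grid 3 = relabel (perm (@rev_ord_inj 5)) (reflect_grid (slope_grid 2)).
Proof.
apply/ffunP => -[i j]; rewrite !ffunE permE /=; apply/eqP.
by move: i j; elim/Z5_ind; elim/Z5_ind.
Qed.

Theorem mainTheorem7 :
  #|[set A : grid | special A]| = 240 /\
  exists S0 : grid, special S0 /\
    forall A : grid, special A ->
      exists sigma : {perm symbol},
        A = relabel sigma S0 \/ A = relabel sigma (reflect_grid S0).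
Proof.
split.
  by rewrite special_setE cardsU slope_orbits_disjoint cards0 !card_slope_orbit.
exists (slope_grid 2); split=> [|A /specialP [A_latin A_sep]].
  exact: special_slope_grid.
have [m /lee_wt_ge2 [] -> [s ->]] := latin_separated_slope_grid A_latin A_sep.
  by exists s; left.
by exists (perm (@rev_ord_inj 5) * s)%g; right; rewrite slope_grid3_reflect relabelM.
Qed.
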